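(* Let $\Lambda$ be a $k$-graph with no sources, $S$ a left-reversible semigroup and $\eta:\Lambda\to S$ a functor. If the system $(\Lambda,S,\eta)$ is cofinal then $\eta$ is upper dense. If $\eta$ is $S$-primitive for $\Lambda$ and upper dense, then $(\Lambda,S,\eta)$ is cofinal.
   Context: All semigroups are countable, cancellative, with identity. $S$ is left-reversible if $sS\cap tS\ne\emptyset$ for all $s,t\in S$. Write $h\ge_l g$ if $h\in gS$. $t\in S$ is strictly positive if for every $s\in S$ there is $n\ge0$ with $t^n\ge_l s$. A $k$-graph is a countable category $\Lambda$ with a functor $d:\Lambda\to\mathbb{N}^k$ with unique factorisation; $\Lambda^n=d^{-1}(n)$, $\Lambda^0$ = vertices, $uXv=\{\lambda\in X:r(\lambda)=u,s(\lambda)=v\}$; no sources: $v\Lambda^n\ne\emptyset$ for $n\ne0$. The system $(\Lambda,S,\eta)$ is cofinal if for all $v,w\in\Lambda^0$, $a,b\in S$ there is $N\in\mathbb{N}^k$ such that for all $\alpha\in w\Lambda^N$ there is $\beta\in v\Lambda s(\alpha)$ with $a\eta(\beta)=b\eta(\alpha)$. $\eta$ is upper dense if for all $w\in\Lambda^0$ and $a,b\in S$ there is $N\in\mathbb{N}^k$ with $b\eta(\alpha)\ge_l a$ for all $\alpha\in w\Lambda^N$. $\eta$ is $S$-primitive for $\Lambda$ if there is a strictly positive $t\in S$ such that for all $v,w\in\Lambda^0$ and all $s\in S$ with $s\ge_l t$, $v\eta^{-1}(s)w\ne\emptyset$. *)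

From mathcomp Require Import all_boot.
Set Implicit Arguments. Unset Strict Implicit. Unset Printing Implicit Defensive.

Record semigroup := Semigroup {
  sg_car :> countType;
  sg_op : sg_car -> sg_car -> sg_car;
  sg_one : sg_car;
  sg_assoc : forall a b c, sg_op a (sg_op b c) = sg_op (sg_op a b) c;
  sg_mul1 : forall a, sg_op sg_one a = a;
  sg_mulr1 : forall a, sg_op a sg_one = a;
  sg_lcancel : forall a b c, sg_op a b = sg_op a c -> b = c;
  sg_rcancel : forall a b c, sg_op b a = sg_op c a -> b = c
}.

Section SG.
Variable S : semigroup.
Local Notation "a * b" := (sg_op a b).

Definition left_reversible : Prop :=
  forall s t : S, exists x y : S, s * x = t * y.

Definition ge_l (h g : S) : Prop := exists x : S, h = g * x.

Fixpoint sg_pow (t : S) (n : nat) : S :=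
  match n with 0 => sg_one S | n'.+1 => t * sg_pow t n' end.

Definition strictly_positive (t : S) : Prop :=
  forall s : S, exists n : nat, ge_l (sg_pow t n) s.
End SG.

Definition deg (k : nat) := {ffun 'I_k -> nat}.
Definition deg_add k (m n : deg k) : deg k := [ffun i => m i + n i].
Definition deg0 k : deg k := [ffun _ => 0].

(** Composition is a total function, meaningful on composable pairs
    (s l = r m); [comp l m] is "l m". *)
Record kgraph (k : nat) := KGraph {
  kg_V : countType;
  kg_M : countType;
  kg_r : kg_M -> kg_V;
  kg_s : kg_M -> kg_V;
  kg_comp : kg_M -> kg_M -> kg_M;
  kg_id : kg_V -> kg_M;
  kg_d : kg_M -> deg k;
  kg_r_id : forall v, kg_r (kg_id v) = v;
  kg_s_id : forall v, kg_s (kg_id v) = v;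
  kg_id_l : forall l, kg_comp (kg_id (kg_r l)) l = l;
  kg_id_r : forall l, kg_comp l (kg_id (kg_s l)) = l;
  kg_r_comp : forall l m, kg_s l = kg_r m -> kg_r (kg_comp l m) = kg_r l;
  kg_s_comp : forall l m, kg_s l = kg_r m -> kg_s (kg_comp l m) = kg_s m;
  kg_assoc : forall l m n, kg_s l = kg_r m -> kg_s m = kg_r n ->
    kg_comp l (kg_comp m n) = kg_comp (kg_comp l m) n;
  kg_d_id : forall v, kg_d (kg_id v) = deg0 k;
  kg_d_comp : forall l m, kg_s l = kg_r m ->
    kg_d (kg_comp l m) = deg_add (kg_d l) (kg_d m);
  kg_fact : forall l (m n : deg k), kg_d l = deg_add m n ->
    exists! p : kg_M * kg_M,
      [/\ kg_s p.1 = kg_r p.2, kg_comp p.1 p.2 = l,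
          kg_d p.1 = m & kg_d p.2 = n]
}.

Section KG.
Variable k : nat.
Variable L : kgraph k.
Variable S : semigroup.
Variable eta : kg_M L -> S.
Local Notation "a * b" := (sg_op a b).

Definition no_sources : Prop :=
  forall (v : kg_V L) (n : deg k), n <> deg0 k ->
    exists l : kg_M L, kg_r l = v /\ kg_d l = n.

(** eta is a functor from Lambda to S (S viewed as a one-object category). *)
Definition is_functor : Prop :=
  (forall v : kg_V L, eta (kg_id v) = sg_one S) /\
  (forall l m : kg_M L, kg_s l = kg_r m ->
     eta (kg_comp l m) = eta l * eta m).

Definition cofinal : Prop :=
  forall (v w : kg_V L) (a b : S), exists N : deg k,
    forall alpha : kg_M L, kg_r alpha = w -> kg_d alpha = N ->
      exists beta : kg_M L, kg_r beta = v /\ kg_s beta = kg_s alpha /\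
        a * eta beta = b * eta alpha.

Definition upper_dense : Prop :=
  forall (w : kg_V L) (a b : S), exists N : deg k,
    forall alpha : kg_M L, kg_r alpha = w -> kg_d alpha = N ->
      ge_l (b * eta alpha) a.

Definition S_primitive : Prop :=
  exists t : S, strictly_positive t /\
    forall (v w : kg_V L) (s : S), ge_l s t ->
      exists l : kg_M L, kg_r l = v /\ kg_s l = w /\ eta l = s.
End KG.

From mathcomp Require Import all_boot.

(* Cofinality at v = w with witness beta gives b eta(alpha) = a eta(beta),
   which lies in aS.  Conversely, upper density applied to the pair (a t, b)
   writes b eta(alpha) = a t x; since t x >=_l t, primitivity supplies a path
   beta from v to s(alpha) with eta(beta) = t x, so a eta(beta) = b eta(alpha). *)

Section CofinalUpperDense.

Variables (k : nat) (L : kgraph k) (S : semigroup) (eta : kg_M L -> S).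

Lemma ge_l_mulr (a x : S) : ge_l (sg_op a x) a.
Proof. by exists x. Qed.

Lemma cofinal_upper_dense : cofinal eta -> upper_dense eta.
Proof.
move=> cof w a b; have [N HN] := cof w w a b.
exists N => alpha r_alpha d_alpha.
have [beta [_ [_ <-]]] := HN alpha r_alpha d_alpha.
exact: ge_l_mulr.
Qed.

Lemma S_primitive_upper_dense_cofinal :
  S_primitive eta -> upper_dense eta -> cofinal eta.
Proof.
move=> [t [_ realize]] dense v w a b.
have [N HN] := dense w (sg_op a t) b.
exists N => alpha r_alpha d_alpha.
have [x ->] := HN alpha r_alpha d_alpha.
have [beta [r_beta [s_beta eta_beta]]] :=
  realize v (kg_s alpha) (sg_op t x) (ge_l_mulr t x).
by exists beta; rewrite eta_beta sg_assoc.
Qed.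

End CofinalUpperDense.

(* Neither direction needs the absence of sources, left reversibility,
   functoriality of eta, or strict positivity of the primitivity element. *)
Theorem proposition5p9 (k : nat) (L : kgraph k) (S : semigroup)
    (eta : kg_M L -> S) :
  no_sources L -> left_reversible S -> is_functor eta ->
  (cofinal eta -> upper_dense eta) /\
  (S_primitive eta -> upper_dense eta -> cofinal eta).
Proof.
move=> _ _ _; split.
- exact: cofinal_upper_dense.
- exact: S_primitive_upper_dense_cofinal.
Qed.
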